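(* Let $K$ be a field, $V$ a $K$-vector space, and $(V_x)_{x\in E}$ a family of subspaces of $V$ indexed by a finite set $E$, representing the polymatroid $(E,f)$ with $f(S)=\dim\big(\sum_{x\in S}V_x\big)$. Let $W_1,W_2,W_3$ be three pairwise distinct one-dimensional subspaces of $K^2$ (a linear representation of $U_{2,3}$). Define $g$ on subsets of $E\times\{1,2,3\}$ by $g(S)=\dim\big(\sum_{(x,i)\in S}V_x\otimes W_i\big)$, the sum taken inside $V\otimes_K K^2$. Then $(E\times\{1,2,3\},g)$ is a tensor product of $(E,f)$ and $U_{2,3}$, and for all $A_1,A_2,A_3\subseteq E$, writing $U_i=\sum_{x\in A_i}V_x$, \[ g\big((A_1\times\{1\})\cup(A_2\times\{2\})\cup(A_3\times\{3\})\big)=f(A_1)+f(A_2)+f(A_3)-\dim(U_1\cap U_2\cap U_3). \]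
   Context: A polymatroid $(E,f)$ consists of a finite ground set $E$ and a function $f\colon 2^E\to\mathbb{R}$ with $f(\emptyset)=0$ that is monotone and submodular. The uniform matroid $U_{2,3}$ is the polymatroid on $\{1,2,3\}$ with rank function $r(T)=\min\{|T|,2\}$. A tensor product of polymatroids $(E_1,f_1)$ and $(E_2,f_2)$ is a polymatroid $(E_1\times E_2,g)$ such that $g(S\times T)=f_1(S)f_2(T)$ for all $S\subseteq E_1$, $T\subseteq E_2$. *)

From HB Require Import structures.
From mathcomp Require Import all_boot all_order all_algebra.
Set Implicit Arguments. Unset Strict Implicit. Unset Printing Implicit Defensive.
Import Order.TTheory GRing.Theory Num.Theory.
Local Open Scope ring_scope.

Definition polymatroid (R : numDomainType) (T : finType) (f : {set T} -> R) : Prop :=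
  [/\ f set0 = 0,
      (forall A B : {set T}, A \subset B -> f A <= f B) &
      (forall A B : {set T}, f (A :|: B) + f (A :&: B) <= f A + f B)].

Definition is_tensor_product (R : numDomainType) (T1 T2 : finType)
    (f1 : {set T1} -> R) (f2 : {set T2} -> R) (g : {set T1 * T2} -> R) : Prop :=
  polymatroid g /\ forall (S : {set T1}) (T : {set T2}), g (setX S T) = f1 S * f2 T.

Definition rank_U23 (T : {set 'I_3}) : nat := minn #|T| 2.

(* The tensor product V ⊗_K K^2 is identified with V * V via
   v ⊗ (a, b) |-> (a v, b v).  Vectors of K^2 are row vectors 'rV[K]_2. *)
Definition tens (K : fieldType) (vT : vectType K) (v : vT) (w : 'rV[K]_2) : vT * vT :=
  (w ord0 ord0 *: v, w ord0 ord_max *: v).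

Definition tensor_sp (K : fieldType) (vT : vectType K)
    (U : {vspace vT}) (W : {vspace 'rV[K]_2}) : {vspace vT * vT} :=
  (<<[seq tens u w | u <- vbasis U, w <- vbasis W]>>)%VS.

(* Identify V ⊗ K^2 with V × V through v ⊗ (a, b) ↦ (a v, b v).  Tensoring
   with a nonzero w ∈ K^2 is then an injective linear map φ_w : V → V × V, and
   V_x ⊗ W_i = φ_{w_i}(V_x) for a generator w_i of W_i, so that
   g(A_1 × {1} ∪ A_2 × {2} ∪ A_3 × {3}) = dim(φ_1 U_1 + φ_2 U_2 + φ_3 U_3).
   Generators of distinct lines have nonzero 2 × 2 determinants, and Cramer's
   rule shows that φ_1 U_1 ∩ φ_2 U_2 = 0 and that
   (φ_1 U_1 + φ_2 U_2) ∩ φ_3 U_3 = φ_3 (U_1 ∩ U_2 ∩ U_3); the modular law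
   dim(A + B) + dim(A ∩ B) = dim A + dim B, used twice, gives the formula for g.
   Taking A_i = S or ∅ according as i ∈ T yields g(S × T) = min(|T|, 2) f(S),
   and g, like any dimension of a sum of subspaces indexed by a set, is a
   polymatroid. *)

From HB Require Import structures.
From mathcomp Require Import all_boot all_order all_algebra.
From mathcomp Require Import ring zify.
Import Order.TTheory GRing.Theory Num.Theory.
Local Open Scope ring_scope.
Set Implicit Arguments. Unset Strict Implicit.

Lemma ord2P (j : 'I_2) : j = ord0 \/ j = ord_max.
Proof. by case: j => [[|[|//]]] ?; [left | right]; apply: val_inj. Qed.

Lemma inord_eq (n m k : nat) : (m <= n)%N -> (k <= n)%N ->
  (inord m == inord k :> 'I_n.+1) = (m == k).
Proof. by move=> le_mn le_kn; rewrite -val_eqE /= !inordK. Qed.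

Lemma big_ord3 (R : Type) (idx : R) (op : Monoid.law idx) (F : 'I_3 -> R) :
  \big[op/idx]_(i < 3) F i = op (op (F (inord 0)) (F (inord 1))) (F (inord 2)).
Proof.
rewrite !big_ord_recr big_ord0 Monoid.mul1m.
by congr (op (op (F _) (F _)) (F _)); apply: val_inj; rewrite /= inordK.
Qed.

Lemma cramer2 (R : comPzRingType) (M : lmodType R) (a1 a2 b1 b2 : R) (x y z1 z2 : M) :
    a1 *: x + a2 *: y = z1 -> b1 *: x + b2 *: y = z2 ->
  (a1 * b2 - a2 * b1) *: x = b2 *: z1 - a2 *: z2
  /\ (a1 * b2 - a2 * b1) *: y = a1 *: z2 - b1 *: z1.
Proof.
move=> <- <-; rewrite !scalerDr !scalerA !scalerBl; split; rewrite opprD addrACA.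
  by rewrite [b2 * a2]mulrC subrr addr0 [b2 * a1]mulrC.
by rewrite [b1 * a1]mulrC subrr add0r [b1 * a2]mulrC.
Qed.

Section Det2.
Variable K : fieldType.
Implicit Types w : 'rV[K]_2.

Definition det2 w1 w2 := w1 ord0 ord0 * w2 ord0 ord_max - w1 ord0 ord_max * w2 ord0 ord0.

Lemma det2C w1 w2 : det2 w2 w1 = - det2 w1 w2.
Proof. by rewrite /det2; ring. Qed.

Lemma det2_neq0 w1 w2 : det2 w1 w2 != 0 -> (w1 != 0) && (w2 != 0).
Proof.
by apply: contraNT => /nandP[] /negPn/eqP->; rewrite /det2 !mxE !(mul0r, mulr0) subrr.
Qed.

Lemma det2_eq0_memv w1 w2 : w1 != 0 -> det2 w1 w2 = 0 -> w2 \in <[w1]>%VS.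
Proof.
move=> /matrix0Pn[i [j]]; rewrite [i]ord1 => w1j_neq0 det0.
have cross k : w1 ord0 j * w2 ord0 k = w2 ord0 j * w1 ord0 k.
  apply/eqP; rewrite -subr_eq0; move: det0; rewrite /det2.
  case: (ord2P j) => ->; case: (ord2P k) => -> det0; apply/eqP;
    [ring | rewrite -det0; ring | rewrite -oppr0 -det0; ring | ring].
apply/vlineP; exists (w2 ord0 j / w1 ord0 j); apply/rowP => k.
by apply: (mulfI w1j_neq0); rewrite !mxE cross; field.
Qed.

End Det2.

Section TensorByVector.
Variables (K : fieldType) (vT : vectType K).
Implicit Types (w : 'rV[K]_2) (U : {vspace vT}).

Definition tens_by w (v : vT) := tens v w.

Lemma tens_by_is_linear w : linear (tens_by w).
Proof.
by move=> k x y; apply: injective_projections; rewrite /= scalerDr !scalerA mulrC.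
Qed.

HB.instance Definition _ w :=
  GRing.isLinear.Build K vT (vT * vT)%type *:%R (tens_by w) (tens_by_is_linear w).

Definition tens_lfun w : 'Hom(vT, (vT * vT)%type) := linfun (tens_by w).

Lemma tens_lfunE w v : tens_lfun w v = (w ord0 ord0 *: v, w ord0 ord_max *: v).
Proof. exact: lfunE. Qed.

Lemma tens_lfun_cramer w1 w2 w x y z :
  tens_lfun w1 x + tens_lfun w2 y = tens_lfun w z ->
  det2 w1 w2 *: x = det2 w w2 *: z /\ det2 w1 w2 *: y = det2 w1 w *: z.
Proof.
rewrite !tens_lfunE => /(congr1 (fun p => (p.1, p.2))) /= [e1 e2].
have [ex ey] := cramer2 e1 e2.
rewrite /det2 [w1 ord0 ord_max * _]mulrC ex ey !scalerA -!scalerBl.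
by split; congr (_ *: z); ring.
Qed.

Lemma tens_lfun_det2 w1 w2 w v :
  det2 w1 w2 *: tens_lfun w v
  = tens_lfun w1 (det2 w w2 *: v) + tens_lfun w2 (det2 w1 w *: v).
Proof.
rewrite !tens_lfunE; apply: injective_projections; rewrite /= !scalerA -scalerDl;
  by congr (_ *: v); rewrite /det2; ring.
Qed.

Lemma lker_tens_lfun w : w != 0 -> lker (tens_lfun w) = 0%VS.
Proof.
move=> /matrix0Pn[i [j]]; rewrite [i]ord1 => wj_neq0.
apply/eqP; rewrite -subv0; apply/subvP => v.
rewrite memv_ker tens_lfunE => /eqP/(congr1 (fun p => (p.1, p.2)))/= [e0 e1].
have: w ord0 j *: v = 0 by case: (ord2P j) => ->.
by move/eqP; rewrite memv0 scaler_eq0 (negPf wj_neq0).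
Qed.

Lemma dim_tens_img w U : w != 0 -> \dim (tens_lfun w @: U) = \dim U.
Proof. by move/lker_tens_lfun=> ker0; apply: limg_dim_eq; rewrite ker0 capv0. Qed.

Lemma capv_tens_img w1 w2 U1 U2 : det2 w1 w2 != 0 ->
  (tens_lfun w1 @: U1 :&: tens_lfun w2 @: U2)%VS = 0%VS.
Proof.
move=> d12; apply/eqP; rewrite -subv0.
apply/subvP => _ /memv_capP[/memv_imgP[u1 _ ->] /memv_imgP[u2 _ e]].
have: tens_lfun w1 u1 + tens_lfun w2 (- u2) = tens_lfun w1 0.
  by rewrite raddfN linear0 e subrr.
case/tens_lfun_cramer => /eqP; rewrite scaler0 scaler_eq0 (negPf d12) => /eqP-> _.
by rewrite linear0 memv0.
Qed.

Lemma capv_tens_img3 w1 w2 w3 U1 U2 U3 :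
  det2 w1 w2 != 0 -> det2 w1 w3 != 0 -> det2 w2 w3 != 0 ->
  ((tens_lfun w1 @: U1 + tens_lfun w2 @: U2) :&: tens_lfun w3 @: U3)%VS
    = (tens_lfun w3 @: (U1 :&: U2 :&: U3))%VS.
Proof.
move=> d12 d13 d23; have d32 : det2 w3 w2 != 0 by rewrite det2C oppr_eq0.
apply/subv_anti/andP; split; apply/subvP.
  move=> _ /memv_capP[/memv_addP[_ /memv_imgP[u1 U1u1 ->] [_ /memv_imgP[u2 U2u2 ->] ->]]].
  case/memv_imgP => u3 U3u3 e; rewrite e memv_img //.
  have [e1 e2] := tens_lfun_cramer e.
  rewrite !memv_cap U3u3 andbT; apply/andP; split.
    by rewrite -(scalerK d32 u3) -e1; apply/memvZ/memvZ.
  by rewrite -(scalerK d13 u3) -e2; apply/memvZ/memvZ.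
move=> _ /memv_imgP[u /memv_capP[/memv_capP[U1u U2u] U3u] ->].
rewrite memv_cap memv_img // andbT -(scalerK d12 (tens_lfun w3 u)) tens_lfun_det2.
by apply/memvZ/memv_add; apply/memv_img/memvZ.
Qed.

Lemma dim_tens_img3 w1 w2 w3 U1 U2 U3 :
    det2 w1 w2 != 0 -> det2 w1 w3 != 0 -> det2 w2 w3 != 0 ->
  (\dim (tens_lfun w1 @: U1 + tens_lfun w2 @: U2 + tens_lfun w3 @: U3)
     + \dim (U1 :&: U2 :&: U3) = \dim U1 + \dim U2 + \dim U3)%N.
Proof.
move=> d12 d13 d23; have /andP[w1_neq0 w2_neq0] := det2_neq0 d12.
have /andP[_ w3_neq0] := det2_neq0 d13.
rewrite -(dim_tens_img (U1 :&: U2 :&: U3) w3_neq0) -(capv_tens_img3 _ _ _ d12 d13 d23).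
rewrite dimv_sum_cap.
have := dimv_sum_cap (tens_lfun w1 @: U1) (tens_lfun w2 @: U2).
by rewrite capv_tens_img // dimv0 addn0 !dim_tens_img // => ->.
Qed.

End TensorByVector.

Arguments tens_lfun {K vT} w.

Section Lines.
Variables (K : fieldType) (vT : vectType K).
Implicit Type W : {vspace vT}.

Definition line_gen W := (vbasis W)`_0.

Lemma vbasis_dimv1 W : \dim W = 1%N -> vbasis W = [:: line_gen W] :> seq vT.
Proof.
rewrite /line_gen => dimW; have : size (vbasis W) = 1%N by rewrite size_tuple.
by case: (tval (vbasis W)) => [|v [|]].
Qed.

Lemma line_gen_neq0 W : \dim W = 1%N -> line_gen W != 0.
Proof.
by move=> dimW; have := basis_free (vbasisP W); rewrite vbasis_dimv1 // seq1_free.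
Qed.

Lemma dimv1_vline W : \dim W = 1%N -> W = <[line_gen W]>%VS.
Proof. by move=> dimW; rewrite -{1}(span_basis (vbasisP W)) vbasis_dimv1 // span_seq1. Qed.

End Lines.

Lemma det2_line_gen (K : fieldType) (W1 W2 : {vspace 'rV[K]_2}) :
  \dim W1 = 1%N -> \dim W2 = 1%N -> W1 != W2 -> det2 (line_gen W1) (line_gen W2) != 0.
Proof.
move=> dimW1 dimW2; apply: contraNneq => /(det2_eq0_memv (line_gen_neq0 dimW1)).
rewrite memvE -(dimv1_vline dimW1) -(dimv1_vline dimW2) => sW21.
by rewrite eq_sym eqEdim sW21 dimW1 dimW2.
Qed.

Lemma tensor_sp_line (K : fieldType) (vT : vectType K) (U : {vspace vT})
    (W : {vspace 'rV[K]_2}) :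
  \dim W = 1%N -> tensor_sp U W = (tens_lfun (line_gen W) @: U)%VS.
Proof.
move=> dimW; rewrite /tensor_sp vbasis_dimv1 //.
rewrite -[in RHS](span_basis (vbasisP U)) limg_span.
by congr (<<_>>%VS); elim: (tval (vbasis U)) => //= u s ->; rewrite lfunE.
Qed.

Definition slice (I J : finType) (S : {set I * J}) (j : J) : {set I} :=
  [set i | (i, j) \in S].

Lemma slice_setU (I J : finType) (S1 S2 : {set I * J}) j :
  slice (S1 :|: S2) j = slice S1 j :|: slice S2 j.
Proof. by apply/setP => i; rewrite !inE. Qed.

Lemma slice_setX (I J : finType) (A : {set I}) (B : {set J}) j :
  slice (setX A B) j = if j \in B then A else set0.
Proof. by apply/setP => i; rewrite !inE; case: (j \in B); rewrite ?inE ?andbT ?andbF. Qed.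

Section SpanSums.
Variables (K : fieldType) (vT : vectType K).

Lemma sumv_subset (I : finType) (F : I -> {vspace vT}) (A B : {set I}) :
  A \subset B -> (\sum_(i in A) F i <= \sum_(i in B) F i)%VS.
Proof. by move/setUidPr <-; rewrite big_setU ?addvSl //; exact: addvv. Qed.

Lemma polymatroid_dimv_sum (R : numDomainType) (I : finType) (F : I -> {vspace vT}) :
  polymatroid (fun A : {set I} => (\dim (\sum_(i in A) F i))%:R : R).
Proof.
split=> [|A B sAB|A B]; first by rewrite big_set0 dimv0.
  by rewrite ler_nat dimvS // sumv_subset.
rewrite -!natrD ler_nat big_setU; last exact: addvv.
rewrite -[X in (_ <= X)%N]dimv_sum_cap leq_add2l dimvS // subv_cap.
by rewrite !sumv_subset ?subsetIl ?subsetIr.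
Qed.

Lemma sumv_slices (I J : finType) (F : I -> J -> {vspace vT}) (S : {set I * J}) :
  (\sum_(p in S) F p.1 p.2 = \sum_j \sum_(i in slice S j) F i j)%VS.
Proof.
rewrite big_mkcond (eq_bigr (fun p => if (p.1, p.2) \in S then F p.1 p.2 else 0%VS)).
  rewrite -(pair_big xpredT xpredT (fun i j => if (i, j) \in S then F i j else 0%VS)).
  rewrite exchange_big; apply: eq_bigr => j _.
  by rewrite [RHS]big_mkcond; apply: eq_bigr => i _; rewrite inE.
by case.
Qed.

End SpanSums.

Lemma card_set_ord3 (T : {set 'I_3}) :
  #|T| = ((inord 0 \in T) + (inord 1 \in T) + (inord 2 \in T))%N.
Proof. by rewrite -sum1_card big_mkcond big_ord3. Qed.

Section TensorWithU23.
Variables (K : fieldType) (vT : vectType K) (E : finType).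
Variables (V : E -> {vspace vT}) (w : 'I_3 -> 'rV[K]_2).
Hypothesis w_indep : forall i j, i != j -> det2 (w i) (w j) != 0.

Lemma dim_tens_sum_slices (S : {set E * 'I_3}) :
  let U i := (\sum_(x in slice S (inord i)) V x)%VS in
  (\dim (\sum_(p in S) tens_lfun (w p.2) @: V p.1) + \dim (U 0 :&: U 1 :&: U 2)
   = \dim (U 0) + \dim (U 1) + \dim (U 2))%N.
Proof.
rewrite /= (sumv_slices (fun x i => tens_lfun (w i) @: V x)%VS) big_ord3 -!limg_sum.
by apply: dim_tens_img3; apply: w_indep; rewrite inord_eq.
Qed.

End TensorWithU23.

Theorem proposition4p1 (K : fieldType) (vT : vectType K) (E : finType)
    (V : E -> {vspace vT}) (W : 'I_3 -> {vspace 'rV[K]_2}) (R : realFieldType) :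
  (forall i, \dim (W i) = 1%N) ->
  (forall i j, W i = W j -> i = j) ->
  let f := fun S : {set E} => \dim (\sum_(x in S) V x)%VS in
  let g := fun S : {set E * 'I_3} =>
             \dim (\sum_(p in S) tensor_sp (V p.1) (W p.2))%VS in
  is_tensor_product (fun S => (f S)%:R : R) (fun T => (rank_U23 T)%:R : R)
                    (fun S => (g S)%:R : R)
  /\ forall A1 A2 A3 : {set E},
       let U1 := (\sum_(x in A1) V x)%VS in
       let U2 := (\sum_(x in A2) V x)%VS in
       let U3 := (\sum_(x in A3) V x)%VS in
       (g (setX A1 [set (inord 0 : 'I_3)] :|: setX A2 [set (inord 1 : 'I_3)]
             :|: setX A3 [set (inord 2 : 'I_3)]))%:Z
       = (f A1)%:Z + (f A2)%:Z + (f A3)%:Z - (\dim (U1 :&: U2 :&: U3)%VS)%:Z.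
Proof.
move=> dimW W_inj f g; pose w i := line_gen (W i).
have w_indep i j : i != j -> det2 (w i) (w j) != 0.
  by move=> neq_ij; apply: det2_line_gen => //; apply: contra_neq neq_ij => /W_inj.
have gE S : g S = \dim (\sum_(p in S) tens_lfun (w p.2) @: V p.1)%VS.
  by congr (\dim _); apply: eq_bigr => p _; apply: tensor_sp_line.
have dim_g S := dim_tens_sum_slices V w_indep S.
split; first split; first exact: polymatroid_dimv_sum.
  move=> S T; have /= := dim_g (setX S T).
  rewrite -gE !slice_setX -natrM /rank_U23 card_set_ord3.
  by case: (_ \in T); case: (_ \in T); case: (_ \in T);
    rewrite ?big_set0 ?capv0 ?cap0v ?capvv ?dimv0 => e; congr (_%:R); rewrite /f; lia.
move=> A1 A2 A3 U1 U2 U3; set S := (_ :|: _ :|: _); have /= := dim_g S.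
rewrite -gE /S !slice_setU !slice_setX !in_set1 !inord_eq //= ?set0U ?setU0.
by rewrite /f /U1 /U2 /U3; lia.
Qed.
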